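(* Let $\mathbf{u}=(u_1,u_2)$ be a pair of real binary forms of degree $d$. Then there exist real binary forms $g$ of degree $m$, $h$ of degree $k$, and $u_1',u_2'$ of degree $d-m-k$ such that: $(u_1,u_2)=(u_1'gh,\,u_2'gh)$; $\gcd(u_1,u_2)=gh$; $\gcd(u_1',u_2')=1$; $\gcd(u_1'^2+u_2'^2,\,g)=1$; and every (possibly complex) root of $h$ is a root of $u_1'^2+u_2'^2$. Moreover, this decomposition is unique up to multiplication by constants.
   Context: A real binary form of degree $d$ is a homogeneous polynomial of degree $d$ in two variables $x_1,x_2$ with real coefficients. Every binary form factors over $\mathbb{C}$ into linear factors $\prod_i(\alpha_i x_1-\beta_i x_2)$, uniquely up to scalars; a root of a binary form is a point $(\beta_i:\alpha_i)$ (a nonzero complex zero up to scaling). For binary forms, $a$ divides $b$ if $b=wa$ for some binary form $w$; $\gcd(a,b)$ is a common divisor of highest degree (unique up to scalar), and $a,b$ are coprime if $\gcd(a,b)=1$ (a constant). *)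

(* binary forms as homogeneous elements of {mpoly R[2]},
   R a real closed field (the reals being the motivating instance),
   complex roots taken in R[i] = complex R. *)
From mathcomp Require Import all_boot all_algebra.
From mathcomp Require Import mpoly complex.
Set Implicit Arguments.
Unset Strict Implicit.
Unset Printing Implicit Defensive.
Import GRing.Theory Num.Theory.
Local Open Scope ring_scope.

Section BinaryForms.
Variable R : rcfType.

Definition is_form (d : nat) (p : {mpoly R[2]}) : Prop :=
  p \is ishomog1 d (@mdeg 2).

Definition fdvd (a b : {mpoly R[2]}) : Prop :=
  exists w : {mpoly R[2]}, w \is homog (@mdeg 2) /\ b = w * a.

(* g is a gcd of a and b: a common divisor of highest degree
   (degree measured by msize = 1 + total degree) *)
Definition is_gcd (a b g : {mpoly R[2]}) : Prop :=
  [/\ g \is homog (@mdeg 2), fdvd g a, fdvd g b &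
      forall c : {mpoly R[2]}, c \is homog (@mdeg 2) ->
        fdvd c a -> fdvd c b -> (msize c <= msize g)%N].

Definition cplx (p : {mpoly R[2]}) : {mpoly R[i][2]} :=
  map_mpoly (real_complex R) p.

Definition is_root (p : {mpoly R[2]}) (v : 'I_2 -> R[i]) : Prop :=
  (exists j, v j != 0) /\ (cplx p).@[v] = 0.

End BinaryForms.

(* Dehomogenizing at the second variable identifies a binary form p of degree n with
   the polynomial p(X, 1), of size at most n + 1; the missing degree is the
   multiplicity of the root (1 : 0).  Divisibility and gcds of forms thus become
   divisibility and gcds of polynomials together with a minimum of multiplicities at
   infinity.  Dividing u1, u2 by their gcd c leaves coprime cofactors v1, v2, and
   q = v1^2 + v2^2 does not vanish at (1 : 0): its top coefficient is a sum of squares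
   of real numbers that are not both zero.  Split c = g h, where g is the largest
   divisor of c coprime to q (so it carries all of c's multiplicity at infinity); then
   every root of h is a root of q.  For uniqueness, gcds of forms agree up to a
   scalar, so g' h' = l g h and the cofactors agree up to 1 / l; as the roots of h are
   roots of q, g' is coprime to h, hence divides g, and symmetrically. *)

From HB Require Import structures.
From mathcomp Require Import all_boot all_algebra.
From mathcomp Require Import mpoly complex.
From mathcomp Require Import ring zify.
Import GRing.Theory Num.Theory.
Local Open Scope ring_scope.

Set Implicit Arguments.
Unset Strict Implicit.
Unset Printing Implicit Defensive.

Local Notation i0 := (ord0 : 'I_2).
Local Notation i1 := (ord_max : 'I_2).

Section Dehomogenization.
Variable R : comNzRingType.
Implicit Types (p q : {mpoly R[2]}) (P : {poly R}).

Definition dehomog p : {poly R} :=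
  mmap (@polyC R) (fun i => if i == i0 then 'X else 1) p.

HB.instance Definition _ :=
  GRing.RMorphism.copy dehomog (mmap (@polyC R) (fun i => if i == i0 then 'X else 1)).

Definition homogenize (n : nat) P : {mpoly R[2]} :=
  \sum_(j < n.+1) P`_j *: ('X_i0 ^+ j * 'X_i1 ^+ (n - j)).

Lemma homogenize_is_linear n : linear (homogenize n).
Proof.
move=> c P Q; rewrite /homogenize scaler_sumr -big_split /=.
by apply: eq_bigr => j _; rewrite coefD coefZ scalerDl scalerA.
Qed.

HB.instance Definition _ n :=
  GRing.isLinear.Build R {poly R} {mpoly R[2]} _ (homogenize n) (homogenize_is_linear n).

Lemma dehomogM p q : dehomog (p * q) = dehomog p * dehomog q.
Proof. exact: rmorphM. Qed.

Lemma dehomogZ c p : dehomog (c *: p) = c *: dehomog p.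
Proof. by rewrite /dehomog mmapZ mul_polyC. Qed.

Lemma dehomog_mpolyX (m : 'X_{1..2}) : dehomog 'X_[m] = 'X^(m i0).
Proof. by rewrite /dehomog mmapX /mmap1 !big_ord_recl big_ord0 /= expr1n !mulr1. Qed.

Lemma dehomogX i : dehomog 'X_i = if i == i0 then 'X else 1.
Proof. by rewrite /dehomog mmapX mmap1U. Qed.

Lemma dehomog_monomial n j :
  dehomog ('X_i0 ^+ j * 'X_i1 ^+ (n - j)) = 'X^j.
Proof. by rewrite rmorphM !rmorphXn /= !dehomogX /= expr1n mulr1. Qed.

Lemma mdeg2 (m : 'X_{1..2}) : mdeg m = (m i0 + m i1)%N.
Proof. by rewrite mdegE !big_ord_recl big_ord0 addn0; congr (_ + (m _))%N; apply: val_inj. Qed.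

Lemma homogenize_homog n P : homogenize n P \is n.-homog.
Proof.
apply: rpred_sum => j _; apply: dhomogZ.
have hX (i : 'I_2) k : ('X_i : {mpoly R[2]}) ^+ k \is k.-homog.
  have hX1 : ('X_i : {mpoly R[2]}) \is 1.-homog by rewrite dhomogX /= mdeg1.
  by have := dhomogMn k hX1; rewrite mul1n.
have le_jn : (j <= n)%N by rewrite -ltnS.
by rewrite -[in X in _ \is X](subnKC le_jn); apply: dhomogM.
Qed.

Lemma dehomog_homogenize n P : dehomog (homogenize n P) = take_poly n.+1 P.
Proof.
rewrite raddf_sum /=.
by under eq_bigr => j _ do rewrite dehomogZ dehomog_monomial; rewrite -poly_def.
Qed.

Lemma homogenizeK n P : (size P <= n.+1)%N -> dehomog (homogenize n P) = P.
Proof. by move=> sP; rewrite dehomog_homogenize take_poly_id. Qed.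

Lemma homogenizeP n P : (size P <= n.+1)%N -> exists2 p, p \is n.-homog & dehomog p = P.
Proof. by exists (homogenize n P); [apply: homogenize_homog | apply: homogenizeK]. Qed.

Lemma homogenize_Xn n a : (a <= n)%N -> homogenize n 'X^a = 'X_i0 ^+ a * 'X_i1 ^+ (n - a).
Proof.
move=> le_an; rewrite /homogenize (bigD1 (Ordinal (le_an : a < n.+1)%N)) //=.
rewrite coefXn eqxx scale1r big1 ?addr0 // => j /eqP ne_ja.
by rewrite coefXn; case: eqP => [ja | _]; [case: ne_ja; apply: val_inj | rewrite scale0r].
Qed.

Lemma mpolyX2 (m : 'X_{1..2}) : 'X_[m] = 'X_i0 ^+ m i0 * 'X_i1 ^+ m i1 :> {mpoly R[2]}.
Proof.
rewrite mpolyXE_id !big_ord_recl big_ord0 mulr1.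
by congr (_ * 'X__ ^+ m _); apply: val_inj.
Qed.

Lemma dehomogK n p : p \is n.-homog -> homogenize n (dehomog p) = p.
Proof.
move=> hp; transitivity (\sum_(m <- msupp p) p@_m *: 'X_[m]); last exact/esym/mpolyE.
have -> : dehomog p = \sum_(m <- msupp p) p@_m *: 'X^(m i0).
  rewrite {1}[p]mpolyE raddf_sum /=.
  by apply: eq_bigr => m _; rewrite dehomogZ dehomog_mpolyX.
rewrite linear_sum !big_seq; apply: eq_bigr => m /(dhomog_mf hp) /= /[!mdeg2] <-.
by rewrite linearZ /= homogenize_Xn ?leq_addr // addKn -mpolyX2.
Qed.

Lemma size_dehomog n p : p \is n.-homog -> (size (dehomog p) <= n.+1)%N.
Proof. by move=> hp; rewrite -(dehomogK hp) dehomog_homogenize size_poly. Qed.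

Lemma dehomog_inj n p q : p \is n.-homog -> q \is n.-homog ->
  dehomog p = dehomog q -> p = q.
Proof. by move=> /dehomogK hp /dehomogK hq e; rewrite -hp -hq e. Qed.

Lemma dehomog_eq0 n p : p \is n.-homog -> (dehomog p == 0) = (p == 0).
Proof.
move=> hp; apply/eqP/eqP => [p0 | ->]; last exact: raddf0.
by rewrite -(dehomogK hp) p0 linear0.
Qed.

Lemma msize_homog n p : p \is n.-homog -> p != 0 -> msize p = n.+1.
Proof.
move=> hp nz_p; rewrite (dhomog_uniq nz_p hp (dhomog_msize hp)) prednK //.
by rewrite lt0n msize_poly_eq0.
Qed.

(* The multiplicity of the root (1 : 0) of a form [p] of degree [n], i.e. the
   exponent of the largest power of 'X_i1 dividing [p]; it is n + 1 for p = 0. *)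
Definition mult_inf n p := (n.+1 - size (dehomog p))%N.

Lemma size_dehomog_add_mult_inf n p :
  p \is n.-homog -> (size (dehomog p) + mult_inf n p)%N = n.+1.
Proof. by move/size_dehomog=> ?; rewrite /mult_inf subnKC. Qed.

End Dehomogenization.

(* [lia] compares atoms syntactically, while [size] and [mult_inf] terms produced
   by lemmas over weaker ring structures differ from ours in their instance
   arguments: generalizing each such term identifies the convertible copies. *)
Ltac size_lia :=
  repeat match goal with
         | H : context [size _] |- _ => revert H
         | H : context [mult_inf _ _] |- _ => revert H
         | H : @eq nat _ _ |- _ => revert H
         | H : is_true (leq _ _) |- _ => revert H
         end;
  repeat match goal with
         | |- context [@size ?T ?p] => let s := fresh "s" in move: (@size T p) => s
         | |- context [@mult_inf ?R ?n ?p] => let s := fresh "m" in move: (@mult_inf R n p) => s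
         end;
  repeat match goal with H : _ |- _ => clear H end;
  intros; lia.

Section MultiplicityAtInfinity.
Variable R : idomainType.
Implicit Types (p q : {mpoly R[2]}).

Lemma mult_infM n m p q : p \is n.-homog -> q \is m.-homog -> p != 0 -> q != 0 ->
  mult_inf (n + m) (p * q) = (mult_inf n p + mult_inf m q)%N.
Proof.
move=> hp hq nz_p nz_q.
have := size_dehomog_add_mult_inf hp; have := size_dehomog_add_mult_inf hq.
rewrite -(dehomog_eq0 hp) -size_poly_gt0 in nz_p.
rewrite -(dehomog_eq0 hq) -size_poly_gt0 in nz_q.
by rewrite /mult_inf dehomogM size_mul -?size_poly_gt0 //; size_lia.
Qed.

End MultiplicityAtInfinity.

Section FieldCoefficients.
Variable F : fieldType.
Implicit Types (p q : {mpoly F[2]}).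

Lemma homog_eqp_scale n n' p q : p \is n.-homog -> q \is n'.-homog -> q != 0 ->
  dehomog p %= dehomog q -> mult_inf n p = mult_inf n' q ->
  n = n' /\ exists2 l, l != 0 & p = l *: q.
Proof.
move=> hp hq nz_q eq_pq mpq.
have sp := size_dehomog_add_mult_inf hp; have sq := size_dehomog_add_mult_inf hq.
have e_nn' : n = n' by move: (eqp_size eq_pq); size_lia.
subst n'; split=> //; case/eqpP: eq_pq => -[c1 c2] /= /andP[nz_c1 nz_c2] e12.
exists (c2 / c1); first by rewrite mulf_neq0 ?invr_eq0.
apply: (dehomog_inj hp (dhomogZ _ hq)).
by rewrite dehomogZ -[dehomog p](scalerK nz_c1) e12 scalerA mulrC.
Qed.

End FieldCoefficients.

Section Evaluation.
Variables (R : comNzRingType) (K : fieldType) (f : {rmorphism R -> K}).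
Implicit Types (p : {mpoly R[2]}) (z : 'I_2 -> K).

Lemma meval_map_homog n p z : p \is n.-homog ->
  (map_mpoly f p).@[z] = \sum_(j < n.+1) f (dehomog p)`_j * z i0 ^+ j * z i1 ^+ (n - j).
Proof.
move=> hp; rewrite -{1}(dehomogK hp) /homogenize.
rewrite (raddf_sum (map_mpoly f)) (raddf_sum (meval z)) /=; apply: eq_bigr => j _.
by rewrite map_mpolyZ mevalZ !rmorphM !rmorphXn /= !map_mpolyX !mevalXU mulrA.
Qed.

Lemma meval_map_homog_affine n p z : p \is n.-homog -> z i1 != 0 ->
  (map_mpoly f p).@[z] = z i1 ^+ n * (map_poly f (dehomog p)).[z i0 / z i1].
Proof.
move=> hp nz_z1; rewrite (meval_map_homog _ hp).
have size_fP : (size (map_poly f (dehomog p)) <= n.+1)%N.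
  by rewrite (leq_trans (size_poly _ _)) // size_dehomog.
rewrite (horner_coef_wide _ size_fP) mulr_sumr; apply: eq_bigr => j _.
have le_jn : (j <= n)%N by rewrite -ltnS.
rewrite coef_map expr_div_n -[in z i1 ^+ n](subnKC le_jn) exprD.
by field; rewrite expf_neq0.
Qed.

Lemma meval_map_homog_inf n p z : p \is n.-homog -> z i1 = 0 ->
  (map_mpoly f p).@[z] = f (dehomog p)`_n * z i0 ^+ n.
Proof.
move=> hp z1_0; rewrite (meval_map_homog _ hp) big_ord_recr /= subnn expr0 mulr1.
by rewrite big1 ?add0r // => j _; rewrite z1_0 expr0n subn_eq0 leqNgt ltn_ord mulr0.
Qed.

End Evaluation.

Section SumOfSquares.
Variable R : realDomainType.
Implicit Types (P Q : {poly R}) (v : {mpoly R[2]}).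

Lemma size_sqr P : size (P ^+ 2) = (size P).*2.-1.
Proof.
have [-> | nz_P] := eqVneq P 0; first by rewrite expr0n size_poly0.
have := size_exp P 2; rewrite (polySpred nz_P) (polySpred (expf_neq0 2 nz_P)) /=.
by rewrite -addnn; lia.
Qed.

Lemma size_sqr_add P Q : size (P ^+ 2 + Q ^+ 2) = (maxn (size P) (size Q)).*2.-1.
Proof.
wlog le_QP : P Q / (size Q <= size P)%N.
  move=> W; case/orP: (leq_total (size Q) (size P)) => [/W // | /W].
  by rewrite addrC maxnC.
rewrite (maxn_idPl le_QP); have [lt_QP | eq_QP] := ltnP (size Q) (size P).
  by rewrite size_polyDl // !size_sqr -!addnn; lia.
have {eq_QP le_QP} eq_QP : size Q = size P by apply/eqP; rewrite eqn_leq le_QP.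
have [P0 | nz_P] := eqVneq P 0.
  by move/eqP: eq_QP; rewrite P0 size_poly0 size_poly_eq0 => /eqP->; rewrite expr0n addr0 size_poly0.
have nz_Q : Q != 0 by rewrite -size_poly_gt0 eq_QP size_poly_gt0.
(* Over a real domain the two leading squares cannot cancel. *)
have top : (P ^+ 2 + Q ^+ 2)`_(size P).*2.-2 = lead_coef P ^+ 2 + lead_coef Q ^+ 2.
  by rewrite coefD -!lead_coef_exp !lead_coefE !size_sqr eq_QP.
apply/eqP; rewrite eqn_leq; apply/andP; split.
  by rewrite -(maxnn (size P).*2.-1) -{2}eq_QP -!size_sqr size_polyD.
have nz_top : (P ^+ 2 + Q ^+ 2)`_(size P).*2.-2 != 0.
  rewrite top lt0r_neq0 // ltr_wpDr ?sqr_ge0 //.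
  by rewrite exprn_even_gt0 //= lead_coef_eq0.
rewrite leqNgt; apply: contra nz_top => lt_s; apply/eqP/nth_default.
by move: lt_s (size_poly_gt0 P); rewrite nz_P; size_lia.
Qed.

Lemma mult_inf_sqr_add n v1 v2 :
  v1 \is n.-homog -> v2 \is n.-homog -> v1 != 0 \/ v2 != 0 ->
  mult_inf (n * 2) (v1 ^+ 2 + v2 ^+ 2) = (minn (mult_inf n v1) (mult_inf n v2)).*2.
Proof.
move=> hv1 hv2 nz_v; have := size_dehomog hv1; have := size_dehomog hv2.
have : (0 < size (dehomog v1))%N || (0 < size (dehomog v2))%N.
  by rewrite !size_poly_gt0 (dehomog_eq0 hv1) (dehomog_eq0 hv2); case: nz_v => ->; rewrite ?orbT.
by rewrite /mult_inf rmorphD !rmorphXn /= size_sqr_add; size_lia.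
Qed.

Lemma sqr_add_homog n v1 v2 : v1 \is n.-homog -> v2 \is n.-homog ->
  v1 ^+ 2 + v2 ^+ 2 \is (n * 2).-homog.
Proof. by move=> hv1 hv2; apply: dhomogD; apply: dhomogMn. Qed.

End SumOfSquares.

Section CoprimeParts.
Variable F : fieldType.
Implicit Types (D G H P Q : {poly F}).

Lemma divp_gdcop_dvdp_exp Q D : Q != 0 -> D != 0 -> D %/ gdcop Q D %| Q ^+ size D.
Proof.
move=> nz_Q nz_D; have nz_G : gdcop Q D != 0.
  by apply: contraNneq nz_D => G0; rewrite -(divpK (dvdp_gdco Q D)) G0 mulr0.
by rewrite -(dvdp_mul2r _ _ nz_G) divpK ?dvdp_gdco // mulrC dvdp_gdcor.
Qed.

Variables (K : fieldType) (f : {rmorphism F -> K}).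

Lemma root_divp_gdcop Q D t : Q != 0 -> D != 0 ->
  root (map_poly f (D %/ gdcop Q D)) t -> root (map_poly f Q) t.
Proof.
move=> nz_Q nz_D rt; have dv : map_poly f (D %/ gdcop Q D) %| map_poly f Q ^+ size D.
  by rewrite -rmorphXn dvdp_map divp_gdcop_dvdp_exp.
by move: (root_dvdp dv rt); rewrite rootE horner_exp expf_eq0 => /andP[_].
Qed.

End CoprimeParts.

Section ClosedFieldRoots.
Variables (F : fieldType) (K : closedFieldType) (f : {rmorphism F -> K}).
Implicit Types (G H P Q : {poly F}).

Lemma coprimep_rootsP P Q :
  reflect (forall t, root (map_poly f P) t -> ~~ root (map_poly f Q) t) (coprimep P Q).
Proof.
rewrite -(coprimep_map f) coprimep_def; apply: (iffP idP) => [/eqP s1 t rP | no_common].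
  apply/negP => rQ; suff : size (gcdp (map_poly f P) (map_poly f Q)) != 1 by rewrite s1.
  by apply/closed_rootP; exists t; rewrite root_gcd rP.
by apply: contraT => /closed_rootP[t]; rewrite root_gcd => /andP[/no_common/negPf->].
Qed.

Lemma coprime_factor_dvdp G H G' H' Q : G * H %= G' * H' -> coprimep Q G' ->
  (forall t, root (map_poly f H) t -> root (map_poly f Q) t) -> G' %| G.
Proof.
move=> eqGH /coprimep_rootsP cop_QG' rootsH.
have cop_G'H : coprimep G' H.
  by apply/coprimep_rootsP => t rG'; apply: contraL rG' => /rootsH /cop_QG'.
by rewrite -(Gauss_dvdpl _ cop_G'H) (eqp_dvdr _ eqGH) dvdp_mulIl.
Qed.

End ClosedFieldRoots.

Lemma cofactors_neq0 (S : idomainType) (u1 u2 v1 v2 c : S) :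
  u1 = v1 * c -> u2 = v2 * c -> u1 != 0 \/ u2 != 0 -> (v1 != 0 \/ v2 != 0) /\ c != 0.
Proof.
by move=> -> ->; case; rewrite mulf_eq0 negb_or => /andP[nz_v ->]; split=> //; [left | right].
Qed.

Section BinaryForms.
Variable R : rcfType.
Implicit Types (a b c p q : {mpoly R[2]}).

Lemma fdvd0 a : fdvd a 0.
Proof. by exists 0; rewrite mul0r; split=> //; apply/homogP; exists 0%N; apply: dhomog0. Qed.

Lemma fdvd_neq0 c a : fdvd c a -> a != 0 -> c != 0.
Proof. by case=> w [_ ->]; apply: contraNneq => ->; rewrite mulr0. Qed.

Lemma fdvdP n m a b : a \is n.-homog -> b \is m.-homog -> a != 0 -> b != 0 ->
  fdvd a b <-> dehomog a %| dehomog b /\ (mult_inf n a <= mult_inf m b)%N.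
Proof.
move=> ha hb nz_a nz_b; split=> [[w [/homogP[r hw] def_b]] | [dvAB le_ab]].
  have nz_w : w != 0 by apply: contraNneq nz_b => w0; rewrite def_b w0 mul0r.
  have hwa := dhomogM hw ha; rewrite -def_b in hwa.
  rewrite (dhomog_uniq nz_b hb hwa) def_b (mult_infM hw ha) // leq_addl.
  by split; rewrite // dehomogM dvdp_mull.
have [W def_B] : exists W, dehomog b = W * dehomog a.
  by exists (dehomog b %/ dehomog a); rewrite divpK.
have nz_W : W != 0 by apply: contraNneq nz_b => W0; rewrite -(dehomog_eq0 hb) def_B W0 mul0r.
have size_W : (size W + size (dehomog a) = size (dehomog b) + 1)%N.
  have nz_A : dehomog a != 0 by rewrite (dehomog_eq0 ha).
  by rewrite def_B size_mul // addn1 prednK // addn_gt0 size_poly_gt0 nz_W.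
have sa := size_dehomog_add_mult_inf ha; have sb := size_dehomog_add_mult_inf hb.
have sW_pos : (0 < size W)%N by rewrite size_poly_gt0.
have le_nm : (n <= m)%N by size_lia.
have [w hw dw] : exists2 w, w \is (m - n).-homog & dehomog w = W.
  by apply: homogenizeP; size_lia.
exists w; split; first exact: homogE hw.
have := dhomogM hw ha; rewrite subnK // => hwa.
by apply: (dehomog_inj hb hwa); rewrite dehomogM dw.
Qed.

(* The multiplicity at infinity of a gcd of [a] and [b]; a zero form imposes no constraint. *)
Definition gcd_mult_inf n m a b :=
  if a == 0 then mult_inf m b
  else if b == 0 then mult_inf n a
  else minn (mult_inf n a) (mult_inf m b).

Lemma gcd_mult_inf_min n a b : a \is n.-homog -> b \is n.-homog ->
  gcd_mult_inf n n a b = minn (mult_inf n a) (mult_inf n b).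
Proof.
move=> ha hb; have sa := size_dehomog ha; have sb := size_dehomog hb.
rewrite /gcd_mult_inf /mult_inf.
by case: eqP => [->|_]; [|case: eqP => [->|_]]; rewrite // raddf0 size_poly0; lia.
Qed.

Definition gcd_deg n m a b :=
  ((size (gcdp (dehomog a) (dehomog b))).-1 + gcd_mult_inf n m a b)%N.

Definition fgcd n m a b : {mpoly R[2]} :=
  homogenize (gcd_deg n m a b) (gcdp (dehomog a) (dehomog b)).

Section FormGcd.
Variables (n m : nat) (a b : {mpoly R[2]}).
Hypotheses (ha : a \is n.-homog) (hb : b \is m.-homog) (nz_ab : a != 0 \/ b != 0).
Local Notation D := (gcdp (dehomog a) (dehomog b)).
Local Notation E := (gcd_mult_inf n m a b).

Lemma gcdp_dehomog_neq0 : D != 0.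
Proof.
by rewrite gcdp_eq0 (dehomog_eq0 ha) (dehomog_eq0 hb) negb_and; case: nz_ab => ->; rewrite ?orbT.
Qed.

Lemma common_fdvdP r c : c \is r.-homog -> c != 0 ->
  fdvd c a /\ fdvd c b <-> dehomog c %| D /\ (mult_inf r c <= E)%N.
Proof.
move=> hc nz_c; rewrite dvdp_gcd /gcd_mult_inf.
have [a0 | nz_a] := eqVneq a 0.
  have nz_b : b != 0 by case: nz_ab; rewrite // a0 eqxx.
  rewrite a0 (fdvdP hc hb nz_c nz_b) raddf0 dvdp0.
  by split=> [[_ //] | dv]; split=> //; apply: fdvd0.
have [b0 | nz_b] := eqVneq b 0.
  rewrite b0 (fdvdP hc ha nz_c nz_a) raddf0 dvdp0 andbT.
  by split=> [[] // | dv]; split=> //; apply: fdvd0.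
rewrite (fdvdP hc ha nz_c nz_a) (fdvdP hc hb nz_c nz_b) leq_min.
by split=> [[[-> ->] [-> ->]] | [/andP[-> ->] /andP[-> ->]]].
Qed.

Lemma msize_common_fdvd c : c \is homog mdeg -> fdvd c a -> fdvd c b ->
  (msize c <= size D + E)%N.
Proof.
move=> /homogP[r hc] dva dvb; have [-> | nz_c] := eqVneq c 0; first by rewrite msize0.
have [/(dvdp_leq gcdp_dehomog_neq0) le_size le_mult] :=
  (common_fdvdP hc nz_c).1 (conj dva dvb).
by rewrite (msize_homog hc nz_c) -(size_dehomog_add_mult_inf hc) leq_add.
Qed.

Lemma fgcd_homog : fgcd n m a b \is (gcd_deg n m a b).-homog.
Proof. exact: homogenize_homog. Qed.

Lemma dehomog_fgcd : dehomog (fgcd n m a b) = D.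
Proof.
have := size_poly_gt0 D; rewrite gcdp_dehomog_neq0.
by rewrite homogenizeK // /gcd_deg; size_lia.
Qed.

Lemma fgcd_neq0 : fgcd n m a b != 0.
Proof. by rewrite -(dehomog_eq0 fgcd_homog) dehomog_fgcd gcdp_dehomog_neq0. Qed.

Lemma mult_inf_fgcd : mult_inf (gcd_deg n m a b) (fgcd n m a b) = E.
Proof.
have := size_poly_gt0 D; rewrite gcdp_dehomog_neq0.
by rewrite /mult_inf dehomog_fgcd /gcd_deg; size_lia.
Qed.

Lemma is_gcdP r c : c \is r.-homog ->
  is_gcd a b c <-> [/\ c != 0, dehomog c %= D & mult_inf r c = E].
Proof.
move=> hc; have sc := size_dehomog_add_mult_inf hc.
have [dv0a dv0b] : fdvd (fgcd n m a b) a /\ fdvd (fgcd n m a b) b.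
  by apply/(common_fdvdP fgcd_homog fgcd_neq0); rewrite dehomog_fgcd mult_inf_fgcd.
have msize_fgcd : msize (fgcd n m a b) = (size D + E)%N.
  rewrite (msize_homog fgcd_homog fgcd_neq0) -(size_dehomog_add_mult_inf fgcd_homog).
  by rewrite dehomog_fgcd mult_inf_fgcd.
split=> [[_ dvca dvcb max_c] | [nz_c eq_cD mc]].
  have nz_c : c != 0 by case: nz_ab => [/(fdvd_neq0 dvca) | /(fdvd_neq0 dvcb)].
  have [dv_cD le_mc] := (common_fdvdP hc nz_c).1 (conj dvca dvcb).
  have le_sc : (size (dehomog c) <= size D)%N := dvdp_leq gcdp_dehomog_neq0 dv_cD.
  have := max_c _ (homogE fgcd_homog) dv0a dv0b.
  rewrite msize_fgcd (msize_homog hc nz_c) => le_D; split=> //; last by size_lia.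
  by rewrite -dvdp_size_eqp //; apply/eqP; size_lia.
have [dvca dvcb] : fdvd c a /\ fdvd c b.
  by apply/(common_fdvdP hc nz_c); rewrite (eqp_dvdl _ eq_cD) dvdpp mc.
split=> // [|c' hc' dvc'a dvc'b]; first exact: homogE hc.
rewrite (msize_homog hc nz_c) -(size_dehomog_add_mult_inf hc) (eqp_size eq_cD) mc.
exact: msize_common_fdvd.
Qed.

Lemma is_gcd_fgcd : is_gcd a b (fgcd n m a b).
Proof. by apply/(is_gcdP fgcd_homog); rewrite fgcd_neq0 dehomog_fgcd eqpxx mult_inf_fgcd. Qed.

End FormGcd.

Lemma is_gcd_unique n m a b c c' : a \is n.-homog -> b \is m.-homog -> a != 0 \/ b != 0 ->
  is_gcd a b c -> is_gcd a b c' -> exists2 l, l != 0 & c' = l *: c.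
Proof.
move=> ha hb nz_ab gc gc'.
have [/homogP[r hc] _ _ _] := gc; have [/homogP[r' hc'] _ _ _] := gc'.
have [nz_c eq_c mc] := (is_gcdP ha hb nz_ab hc).1 gc.
have [_ eq_c' mc'] := (is_gcdP ha hb nz_ab hc').1 gc'.
have eq_cc' : dehomog c' %= dehomog c by rewrite (eqp_trans eq_c') // eqp_sym.
by have [] := homog_eqp_scale hc' hc nz_c eq_cc' (etrans mc' (esym mc)).
Qed.

Lemma is_gcd1P n m a b : a \is n.-homog -> b \is m.-homog -> a != 0 \/ b != 0 ->
  is_gcd a b 1 <-> coprimep (dehomog a) (dehomog b) /\ gcd_mult_inf n m a b = 0%N.
Proof.
move=> ha hb nz_ab; rewrite (is_gcdP ha hb nz_ab (dhomog1 _ _)) rmorph1 eqp_sym gcdp_eqp1.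
by rewrite /mult_inf rmorph1 size_poly1 subnn oner_neq0; split=> [[_ -> <-] | [-> <-]].
Qed.

End BinaryForms.

Section Decomposition.
Variable R : rcfType.
Implicit Types (c g h p q u v : {mpoly R[2]}).
Local Notation toC := (real_complex R).

Lemma mult_inf_sqr_add_eq0 n v1 v2 : v1 \is n.-homog -> v2 \is n.-homog ->
  v1 != 0 \/ v2 != 0 -> is_gcd v1 v2 1 -> mult_inf (n * 2) (v1 ^+ 2 + v2 ^+ 2) = 0%N.
Proof.
move=> hv1 hv2 nz_v /(is_gcd1P hv1 hv2 nz_v)[_].
by rewrite mult_inf_sqr_add // (gcd_mult_inf_min hv1 hv2) => ->.
Qed.

Lemma cplx_eval_eq0 n p z : p \is n.-homog -> (exists j, z j != 0) ->
  (cplx p).@[z] = 0 <->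
  if z i1 == 0 then (0 < mult_inf n p)%N else root (map_poly toC (dehomog p)) (z i0 / z i1).
Proof.
move=> hp [j nz_zj]; apply: (iff_trans (rwP eqP)); rewrite /cplx.
have [z1_0 | nz_z1] := eqVneq (z i1) 0; last first.
  by rewrite (meval_map_homog_affine _ hp nz_z1) mulf_eq0 expf_eq0 (negbTE nz_z1) andbF.
have nz_z0 : z i0 != 0.
  case: j nz_zj => -[|[|//]] lt_j nz_zj; first by rewrite (_ : i0 = Ordinal lt_j) //; apply: val_inj.
  by move: nz_zj; rewrite (_ : Ordinal lt_j = i1) ?z1_0 ?eqxx //; apply: val_inj.
rewrite (meval_map_homog_inf _ hp z1_0) mulf_eq0 expf_eq0 (negbTE nz_z0) andbF orbF fmorph_eq0.
have le_sP := size_dehomog hp; rewrite /mult_inf subn_gt0 ltnS.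
split=> [/eqP Pn0 | le_sn]; last by rewrite nth_default.
rewrite leqNgt; apply/negP => lt_ns.
have sP : size (dehomog p) = n.+1 by apply/eqP; rewrite eqn_leq le_sP.
have : lead_coef (dehomog p) != 0 by rewrite lead_coef_eq0 -size_poly_gt0 sP.
by rewrite lead_coefE sP Pn0 eqxx.
Qed.

Lemma gcd_cofactors d u1 u2 : u1 \is d.-homog -> u2 \is d.-homog -> u1 != 0 \/ u2 != 0 ->
  exists e c v1 v2, [/\ (e <= d)%N, c \is e.-homog /\ c != 0,
    v1 \is (d - e).-homog /\ v2 \is (d - e).-homog, u1 = v1 * c /\ u2 = v2 * c &
    is_gcd u1 u2 c /\ is_gcd v1 v2 1].
Proof.
move=> hu1 hu2 nz_u; pose D := gcdp (dehomog u1) (dehomog u2); pose e := gcd_deg d d u1 u2.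
have nz_D : D != 0 := gcdp_dehomog_neq0 hu1 hu2 nz_u.
have sD_pos : (0 < size D)%N by rewrite size_poly_gt0.
have e_def : e = ((size D).-1 +
    minn (d.+1 - size (dehomog u1)) (d.+1 - size (dehomog u2)))%N.
  by rewrite /e /gcd_deg (gcd_mult_inf_min hu1 hu2).
have sU1 := size_dehomog hu1; have sU2 := size_dehomog hu2.
have sDU (u : {mpoly R[2]}) : D %| dehomog u -> size (dehomog u) = 0%N \/ (size D <= size (dehomog u))%N.
  have [-> _ | nz_U dv] := eqVneq (dehomog u) 0; [left; exact: size_poly0 | right].
  exact: dvdp_leq dv.
have sDU1 := sDU _ (dvdp_gcdl _ _); have sDU2 := sDU _ (dvdp_gcdr _ _).
have sU_pos : (0 < size (dehomog u1))%N \/ (0 < size (dehomog u2))%N.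
  by rewrite !size_poly_gt0 (dehomog_eq0 hu1) (dehomog_eq0 hu2).
have sV1 : size (dehomog u1 %/ D) = (size (dehomog u1) - (size D).-1)%N := size_divp _ nz_D.
have sV2 : size (dehomog u2 %/ D) = (size (dehomog u2) - (size D).-1)%N := size_divp _ nz_D.
have le_ed : (e <= d)%N by size_lia.
have [v1 hv1 dv1] : exists2 v1, v1 \is (d - e).-homog & dehomog v1 = dehomog u1 %/ D.
  by apply: homogenizeP; size_lia.
have [v2 hv2 dv2] : exists2 v2, v2 \is (d - e).-homog & dehomog v2 = dehomog u2 %/ D.
  by apply: homogenizeP; size_lia.
have def_u u v : u \is d.-homog -> D %| dehomog u -> v \is (d - e).-homog ->
    dehomog v = dehomog u %/ D -> u = v * fgcd d d u1 u2.
  move=> hu dvu hv dv; have := dhomogM hv (fgcd_homog d d u1 u2); rewrite subnK // => hvc.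
  by apply: (dehomog_inj hu hvc); rewrite dehomogM dv (dehomog_fgcd hu1 hu2 nz_u) divpK.
have def_u1 := def_u _ _ hu1 (dvdp_gcdl _ _) hv1 dv1.
have def_u2 := def_u _ _ hu2 (dvdp_gcdr _ _) hv2 dv2.
have [nz_v _] := cofactors_neq0 def_u1 def_u2 nz_u.
exists e, (fgcd d d u1 u2), v1, v2; split=> //.
  by split; [exact: fgcd_homog | exact: (fgcd_neq0 hu1 hu2 nz_u)].
split; first exact: (is_gcd_fgcd hu1 hu2 nz_u).
apply/(is_gcd1P hv1 hv2 nz_v); rewrite (gcd_mult_inf_min hv1 hv2) /mult_inf dv1 dv2.
split; last by size_lia.
apply: coprimep_div_gcd.
by rewrite (dehomog_eq0 hu1) (dehomog_eq0 hu2); case: nz_u => ->; rewrite ?orbT.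
Qed.

Lemma coprime_part_split e c n q : c \is e.-homog -> c != 0 ->
  q \is n.-homog -> mult_inf n q = 0%N ->
  exists m k g h, [/\ (m + k = e)%N, g \is m.-homog /\ h \is k.-homog, c = g * h,
    is_gcd q g 1 & forall z, is_root h z -> is_root q z].
Proof.
move=> hc nz_c hq mq.
have nz_q : q != 0 by apply: contra_eqN mq => /eqP->; rewrite /mult_inf raddf0 size_poly0.
have nz_C : dehomog c != 0 by rewrite (dehomog_eq0 hc).
have nz_Q : dehomog q != 0 by rewrite (dehomog_eq0 hq).
have cop_QG : coprimep (dehomog q) (gdcop (dehomog q) (dehomog c)).
  by rewrite coprimep_sym coprimep_gdco.
have roots_H t : root (map_poly toC (dehomog c %/ gdcop (dehomog q) (dehomog c))) t ->
    root (map_poly toC (dehomog q)) t.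
  exact: root_divp_gdcop.
have def_C : dehomog c = dehomog c %/ gdcop (dehomog q) (dehomog c) * gdcop (dehomog q) (dehomog c).
  by rewrite divpK ?dvdp_gdco.
move: cop_QG roots_H def_C; move: (gdcop _ _) => G cop_QG; move: (_ %/ G) => H roots_H def_C.
have nz_G : G != 0 by apply: contraNneq nz_C => G0; rewrite def_C G0 mulr0.
have nz_H : H != 0 by apply: contraNneq nz_C => H0; rewrite def_C H0 mul0r.
have sC : size (dehomog c) = (size H + size G).-1 by rewrite def_C size_mul.
have sC_le : (size (dehomog c) <= e.+1)%N := size_dehomog hc.
have [sG_pos sH_pos] : (0 < size G)%N /\ (0 < size H)%N by rewrite !size_poly_gt0.
have [k sH] : exists k, size H = k.+1 by exists (size H).-1; rewrite prednK.
have [m emk] : exists m, (m + k = e)%N by exists (e - k)%N; rewrite subnK //; size_lia.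
have sG_le : (size G <= m.+1)%N by size_lia.
have sH_le : (size H <= k.+1)%N by rewrite sH.
have [g hg dg] := homogenizeP sG_le; have [h hh dh] := homogenizeP sH_le.
have nz_g : g != 0 by rewrite -(dehomog_eq0 hg) dg.
have mh : mult_inf k h = 0%N by rewrite /mult_inf dh sH subnn.
exists m, k, g, h; split; [exact: emk | by split | | |].
- have := dhomogM hg hh; rewrite emk => hgh.
  by apply: (dehomog_inj hc hgh); rewrite dehomogM dg dh mulrC -def_C.
- apply/(is_gcd1P hq hg (or_introl nz_q)); split; first by rewrite dg.
  by rewrite /gcd_mult_inf (negbTE nz_q) (negbTE nz_g) mq min0n.
move=> z [nz_z /(cplx_eval_eq0 hh nz_z) hz]; split; first exact: nz_z.
apply/(cplx_eval_eq0 hq nz_z); move: hz; rewrite mh mq.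
by case: ifP => [_ //|_]; rewrite dh; apply: roots_H.
Qed.

End Decomposition.

Section Uniqueness.
Variable R : rcfType.
Implicit Types (c g h p q u v : {mpoly R[2]}).
Local Notation toC := (real_complex R).

Record decomposition d u1 u2 m k g h v1 v2 : Prop := Decomposition {
  decomp_g : g \is m.-homog;
  decomp_h : h \is k.-homog;
  decomp_v1 : v1 \is (d - m - k).-homog;
  decomp_v2 : v2 \is (d - m - k).-homog;
  decomp_u1 : u1 = v1 * g * h;
  decomp_u2 : u2 = v2 * g * h;
  decomp_gcd : is_gcd u1 u2 (g * h);
  decomp_gcd_v : is_gcd v1 v2 1;
  decomp_gcd_g : is_gcd (v1 ^+ 2 + v2 ^+ 2) g 1;
  decomp_roots_h : forall z, is_root h z -> is_root (v1 ^+ 2 + v2 ^+ 2) z }.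

Definition point (x y : R[i]) : 'I_2 -> R[i] := fun i => if i == i0 then x else y.

Lemma decomposition_props d u1 u2 m k g h v1 v2 :
  u1 != 0 \/ u2 != 0 -> decomposition d u1 u2 m k g h v1 v2 ->
  [/\ g != 0, h != 0, mult_inf k h = 0%N,
      coprimep (dehomog (v1 ^+ 2 + v2 ^+ 2)) (dehomog g)
    & forall t, root (map_poly toC (dehomog h)) t ->
                root (map_poly toC (dehomog (v1 ^+ 2 + v2 ^+ 2))) t].
Proof.
move=> nz_u [hg hh hv1 hv2 def_u1 def_u2 _ gcd_v gcd_g roots_h].
rewrite -mulrA in def_u1; rewrite -mulrA in def_u2.
have [nz_v] := cofactors_neq0 def_u1 def_u2 nz_u; rewrite mulf_eq0 negb_or => /andP[nz_g nz_h].
have hq := sqr_add_homog hv1 hv2.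
have mq := mult_inf_sqr_add_eq0 hv1 hv2 nz_v gcd_v.
have nz_q : v1 ^+ 2 + v2 ^+ 2 != 0.
  by apply: contra_eqN mq => /eqP->; rewrite /mult_inf raddf0 size_poly0.
have [cop_QG _] := (is_gcd1P hq hg (or_introl nz_q)).1 gcd_g.
have nz_point x : exists j, point x 1 j != 0 by exists i1; rewrite /point /= oner_eq0.
have nz_inf : exists j, point 1 0 j != 0 by exists i0; rewrite /point /= oner_eq0.
split=> // [|t rH].
  apply/eqP; rewrite -leqn0 leqNgt; apply/negP => mh_pos.
  have [_ /(cplx_eval_eq0 hq nz_inf)] : is_root (v1 ^+ 2 + v2 ^+ 2) (point 1 0).
    by apply: roots_h; split=> //; apply/(cplx_eval_eq0 hh nz_inf); rewrite /point /= eqxx.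
  by rewrite /point /= eqxx mq.
have [_ /(cplx_eval_eq0 hq (nz_point t))] : is_root (v1 ^+ 2 + v2 ^+ 2) (point t 1).
  by apply: roots_h; split=> //; apply/(cplx_eval_eq0 hh (nz_point t)); rewrite /point /= oner_eq0 divr1.
by rewrite /point /= oner_eq0 divr1.
Qed.

Lemma decomposition_unique d u1 u2 m k g h v1 v2 m' k' g' h' v1' v2' :
  u1 \is d.-homog -> u2 \is d.-homog -> u1 != 0 \/ u2 != 0 ->
  decomposition d u1 u2 m k g h v1 v2 -> decomposition d u1 u2 m' k' g' h' v1' v2' ->
  exists a b c : R, [/\ a != 0 /\ b != 0 /\ c != 0,
    g' = a *: g, h' = b *: h & v1' = c *: v1 /\ v2' = c *: v2].
Proof.
move=> hu1 hu2 nz_u dec dec'.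
have [nz_g nz_h mh cop rts] := decomposition_props nz_u dec.
have [nz_g' nz_h' mh' cop' rts'] := decomposition_props nz_u dec'.
case: dec dec' => [hg hh _ _ def_u1 def_u2 gcd_u _ _ _] [hg' hh' _ _ def_u1' def_u2' gcd_u' _ _ _].
have [l nz_l def_gh'] := is_gcd_unique hu1 hu2 nz_u gcd_u gcd_u'.
have def_v v v' : v * g * h = v' * g' * h' -> v = l *: v'.
  move=> e; apply: (mulIf (mulf_neq0 nz_g nz_h)) => /=.
  by rewrite mulrA e -mulrA def_gh' -scalerAr scalerAl.
have def_v1 := def_v _ _ (etrans (esym def_u1) def_u1').
have def_v2 := def_v _ _ (etrans (esym def_u2) def_u2').
have nz_l2 : l ^+ 2 != 0 by rewrite expf_neq0.
have def_Q : dehomog (v1 ^+ 2 + v2 ^+ 2) = l ^+ 2 *: dehomog (v1' ^+ 2 + v2' ^+ 2).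
  by rewrite def_v1 def_v2 !exprZn -scalerDr dehomogZ.
rewrite def_Q coprimepZl // in cop.
have {}rts t : root (map_poly toC (dehomog h)) t ->
    root (map_poly toC (dehomog (v1' ^+ 2 + v2' ^+ 2))) t.
  by move/rts; rewrite def_Q map_polyZ rootZ // fmorph_eq0.
have eqGH : dehomog g * dehomog h %= dehomog g' * dehomog h'.
  by rewrite -!dehomogM def_gh' dehomogZ eqp_sym eqp_scale.
have eqG : dehomog g' %= dehomog g.
  apply/andP; split; first exact: coprime_factor_dvdp eqGH cop' rts.
  have eqG'H' : dehomog g' * dehomog h' %= dehomog g * dehomog h by rewrite eqp_sym.
  exact: coprime_factor_dvdp eqG'H' cop rts'.
have eqH : dehomog h' %= dehomog h.
  have nz_G' : dehomog g' != 0 by rewrite (dehomog_eq0 hg').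
  by rewrite -(eqp_mul2l _ _ nz_G') eqp_sym (eqp_trans (eqp_mulr _ eqG) eqGH).
have [_ _ mgh] := (is_gcdP hu1 hu2 nz_u (dhomogM hg hh)).1 gcd_u.
have [_ _ mgh'] := (is_gcdP hu1 hu2 nz_u (dhomogM hg' hh')).1 gcd_u'.
rewrite mult_infM // mh addn0 in mgh; rewrite mult_infM // mh' addn0 -mgh in mgh'.
have [_ [a nz_a def_g']] := homog_eqp_scale hg' hg nz_g eqG mgh'.
have [_ [b nz_b def_h']] := homog_eqp_scale hh' hh nz_h eqH (etrans mh' (esym mh)).
exists a, b, l^-1; split=> //; first by rewrite nz_a nz_b invr_eq0.
by rewrite def_v1 def_v2 !scalerA !mulVf // !scale1r.
Qed.

End Uniqueness.

Theorem proposition3p4 (R : rcfType) (d : nat) (u1 u2 : {mpoly R[2]}) :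
  is_form d u1 -> is_form d u2 -> (u1 != 0 \/ u2 != 0) ->
  (exists (m k : nat) (g h v1 v2 : {mpoly R[2]}),
     [/\ (m + k <= d)%N /\ is_form m g /\ is_form k h,
         is_form (d - m - k) v1 /\ is_form (d - m - k) v2,
         u1 = v1 * g * h /\ u2 = v2 * g * h,
         is_gcd u1 u2 (g * h) /\ is_gcd v1 v2 1 &
         is_gcd (v1 ^+ 2 + v2 ^+ 2) g 1 /\
         (forall z : 'I_2 -> R[i], is_root h z -> is_root (v1 ^+ 2 + v2 ^+ 2) z)])
  /\
  (forall (m k m' k' : nat) (g h v1 v2 g' h' v1' v2' : {mpoly R[2]}),
     is_form m g -> is_form k h -> is_form (d - m - k) v1 -> is_form (d - m - k) v2 ->
     u1 = v1 * g * h -> u2 = v2 * g * h ->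
     is_gcd u1 u2 (g * h) -> is_gcd v1 v2 1 -> is_gcd (v1 ^+ 2 + v2 ^+ 2) g 1 ->
     (forall z : 'I_2 -> R[i], is_root h z -> is_root (v1 ^+ 2 + v2 ^+ 2) z) ->
     is_form m' g' -> is_form k' h' -> is_form (d - m' - k') v1' -> is_form (d - m' - k') v2' ->
     u1 = v1' * g' * h' -> u2 = v2' * g' * h' ->
     is_gcd u1 u2 (g' * h') -> is_gcd v1' v2' 1 -> is_gcd (v1' ^+ 2 + v2' ^+ 2) g' 1 ->
     (forall z : 'I_2 -> R[i], is_root h' z -> is_root (v1' ^+ 2 + v2' ^+ 2) z) ->
     exists a b c : R, [/\ a != 0 /\ b != 0 /\ c != 0,
       g' = a *: g, h' = b *: h & v1' = c *: v1 /\ v2' = c *: v2]).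
Proof.
rewrite /is_form => hu1 hu2 nz_u; split.
  case: (gcd_cofactors hu1 hu2 nz_u) => e [c [v1 [v2 [le_ed [hc nz_c] [hv1 hv2] [def_u1 def_u2] [gcd_u gcd_v]]]]].
  have [nz_v _] := cofactors_neq0 def_u1 def_u2 nz_u.
  have hq := sqr_add_homog hv1 hv2; have mq := mult_inf_sqr_add_eq0 hv1 hv2 nz_v gcd_v.
  case: (coprime_part_split hc nz_c hq mq) => m [k [g [h [emk [hg hh] def_c gcd_g roots_h]]]].
  exists m, k, g, h, v1, v2; rewrite -subnDA emk -!mulrA -def_c.
  by split.
move=> m k m' k' g h v1 v2 g' h' v1' v2' hg hh hv1 hv2 def_u1 def_u2 gcd_u gcd_v gcd_g roots_h.
move=> hg' hh' hv1' hv2' def_u1' def_u2' gcd_u' gcd_v' gcd_g' roots_h'.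
exact: decomposition_unique hu1 hu2 nz_u
  (Decomposition hg hh hv1 hv2 def_u1 def_u2 gcd_u gcd_v gcd_g roots_h)
  (Decomposition hg' hh' hv1' hv2' def_u1' def_u2' gcd_u' gcd_v' gcd_g' roots_h').
Qed.
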